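(* Let $\alpha>0$ and let $X_{1,1},X_{1,2}$ be i.i.d. real random variables such that $$x^{1+2\alpha}\,\mathbb P\big(|X_{1,1}X_{1,2}|\ge\sqrt{x\log x}\big)\to0\quad\text{as }x\to\infty.$$ Then $$\mathbb E\Big(\frac{|X_{1,1}|^{2+4\alpha}}{(1+\log|X_{1,1}|)^{4+4\alpha}}\Big)<\infty.$$
   Context: Here $\log x$ denotes $\ln\max(x,e)$ (so $\log|X_{1,1}|\ge1$). *)

From HB Require Import structures.
From mathcomp Require Import all_boot all_order all_algebra.
From mathcomp Require Import all_classical all_reals all_analysis.
Set Implicit Arguments. Unset Strict Implicit. Unset Printing Implicit Defensive.
Import Order.TTheory GRing.Theory Num.Theory.
Local Open Scope classical_set_scope.
Local Open Scope ring_scope.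

(* The paper's convention: log x := ln (max x e), so that log x >= 1. *)
Definition plog {R : realType} (x : R) : R := ln (Num.max x (expR 1)).

Definition indep2 {d} {T : measurableType d} {R : realType}
  (P : probability T R) (X Y : T -> R) : Prop :=
  forall A B : set R, measurable A -> measurable B ->
    P (X @^-1` A `&` Y @^-1` B) = (P (X @^-1` A) * P (Y @^-1` B))%E.

Definition ident_distr {d} {T : measurableType d} {R : realType}
  (P : probability T R) (X Y : T -> R) : Prop :=
  forall A : set R, measurable A -> P (X @^-1` A) = P (Y @^-1` A).

(* Cut the range of |X1| into the dyadic blocks [2^k, 2^(k+1)).  With
   p = 1 + 2 alpha, the integrand is at most M_k = 4^((k+1)p) / (1 + log 2^k)^(2p+2)
   on the k-th block, so the expectation is at most 1 + sum_k M_k P(|X1| >= 2^k).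
   Independence and equal laws give
   P(|X1| >= 2^k) P(|X1| >= 1) <= P(|X1 X2| >= 2^k), and 2^k >= sqrt(x_k log x_k)
   for x_k = 4^k / (2(k+1)); for large k the hypothesis bounds the right-hand side
   by x_k^(-p).  As log 2^k is of order k, this makes M_k P(|X1| >= 2^k) = O(k^-2),
   and the series converges. *)

From HB Require Import structures.
From mathcomp Require Import all_boot all_order all_algebra.
From mathcomp Require Import all_classical all_reals all_analysis.
From mathcomp Require Import ring lra measurable_realfun.
Set Implicit Arguments. Unset Strict Implicit.
Import Order.TTheory GRing.Theory Num.Theory.
Local Open Scope classical_set_scope.
Local Open Scope ring_scope.

Section plog.
Variable R : realType.
Implicit Types x y : R.

Lemma plog_ge1 x : 1 <= plog x.
Proof.
rewrite /plog -[X in X <= _](expRK 1) ler_ln ?posrE ?expR_gt0 ?le_max ?lexx ?orbT//.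
by rewrite lt_max expR_gt0 orbT.
Qed.

Lemma ler_plog : {homo @plog R : x y / x <= y}.
Proof.
move=> x y xy; rewrite /plog ler_ln ?posrE ?lt_max ?expR_gt0 ?orbT//.
by rewrite ge_max !le_max xy lexx !orbT.
Qed.

Lemma ln_le_plog x : 0 < x -> ln x <= plog x.
Proof. by move=> x0; rewrite /plog ler_ln ?posrE ?lt_max ?expR_gt0 ?orbT ?le_max ?lexx. Qed.

Lemma ln2_le1 : ln 2 <= 1 :> R.
Proof.
rewrite -[leRHS](expRK 1) ler_ln ?posrE ?expR_gt0//.
by apply: le_trans (expR_ge1Dx 1); rewrite [leRHS]addrC.
Qed.

Lemma ln2_mul_le_plog k : ln 2 * k.+1%:R <= 1 + plog (2 ^+ k : R).
Proof.
have ln2k : ln 2 * k%:R <= plog (2 ^+ k : R).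
  by rewrite mulr_natr -lnXn// ln_le_plog// exprn_gt0.
apply: le_trans _ (lerD ln2_le1 ln2k).
by rewrite -natr1; lra.
Qed.

Lemma plog_le x c : 0 < x -> ln x <= c -> 1 <= c -> plog x <= c.
Proof.
move=> x_gt0 lnx c1; rewrite /plog -[leRHS]expRK ler_ln ?posrE ?expR_gt0 ?lt_max ?x_gt0//.
by rewrite ge_max ler_expR c1 -[x]lnK ?posrE// ler_expR lnx.
Qed.

End plog.

Lemma dyadic_floor (R : realType) (t : R) : 1 <= t ->
  exists k, 2 ^+ k <= t < 2 ^+ k.+1.
Proof.
move=> t_ge1; have n_gt0 : (0 < Num.truncn t)%N by rewrite truncn_gt0.
exists (trunc_log 2 (Num.truncn t)); rewrite -!natrX; apply/andP; split.
  apply: le_trans (_ : (Num.truncn t)%:R <= t); last by rewrite truncn_le; lra.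
  by rewrite ler_nat trunc_logP.
apply: lt_le_trans (truncnS_gt t) _.
by rewrite ler_nat trunc_log_ltn.
Qed.

Section dyadic_scale.
Variable R : realType.

Definition dyadic_scale (k : nat) : R := (2 ^+ k) ^+ 2 / (2 * k.+1%:R).

Lemma dyadic_scale_gt0 k : 0 < dyadic_scale k.
Proof. by rewrite divr_gt0 ?exprn_gt0 ?mulr_gt0. Qed.

Lemma natrS_le_exp2 k : k.+1%:R <= 2 ^+ k :> R.
Proof. by rewrite -natrX ler_nat ltn_expl. Qed.

Lemma half_natrS_le_dyadic_scale k : k.+1%:R / 2 <= dyadic_scale k.
Proof.
have n_gt0 : 0 < k.+1%:R :> R by [].
rewrite /dyadic_scale ler_pdivlMr ?mulr_gt0//.
have -> : k.+1%:R / 2 * (2 * k.+1%:R) = k.+1%:R ^+ 2 :> R by field.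
by rewrite lerXn2r ?nnegrE ?natrS_le_exp2 ?exprn_ge0 ?ltW.
Qed.

Lemma dyadic_scale_cvgy : dyadic_scale @ \oo --> +oo.
Proof.
apply/cvgryPge => A; near=> k; apply: le_trans (half_natrS_le_dyadic_scale k).
rewrite ler_pdivlMr//; apply: le_trans (_ : k%:R <= _); last by rewrite ler_nat.
by near: k; exact: nbhs_infty_ger.
Unshelve. all: end_near. Qed.

Lemma sqrt_dyadic_scale_le k :
  Num.sqrt (dyadic_scale k * plog (dyadic_scale k)) <= 2 ^+ k.
Proof.
set x := dyadic_scale k; set n : R := k.+1%:R.
have x_gt0 : 0 < x := dyadic_scale_gt0 k.
have n_ge1 : 1 <= n by rewrite ler1n.
have plog_x : plog x <= 2 * n.
  apply: plog_le => //; last lra.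
  apply: le_trans (_ : ln ((2 ^+ k) ^+ 2) <= _).
    rewrite ler_ln ?posrE ?exprn_gt0// /x /dyadic_scale ler_pdivrMr ?mulr_gt0//.
    by rewrite ler_peMr ?exprn_ge0//; lra.
  rewrite -exprM lnXn// -[_ *+ _]mulr_natr natrM /n -natr1.
  have := @ln2_le1 R; have : 0 <= ln 2 :> R by rewrite ln_ge0// ler1n.
  have : 0 <= k%:R :> R by [].
  nra.
rewrite -[leRHS]ger0_norm ?exprn_ge0// -sqrtr_sqr ler_wsqrtr//.
apply: le_trans (_ : x * (2 * n) <= _); first by rewrite ler_wpM2l// ltW.
by rewrite /x /dyadic_scale mulfVK// mulf_neq0// gt_eqF.
Qed.

Lemma dyadic_weight_le (p : R) k : 0 <= p ->
  (2 ^+ k.+1) `^ (p * 2) / (1 + plog (2 ^+ k : R)) `^ (p + (p + 2))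
  <= 8 `^ p / ln 2 `^ (p + (p + 2)) / k.+1%:R ^+ 2 * dyadic_scale k `^ p.
Proof.
move=> p_ge0; set u : R := 2 ^+ k; set n : R := k.+1%:R; set b := p + (p + 2).
have u_gt0 : 0 < u by rewrite exprn_gt0.
have n_ge1 : 1 <= n by rewrite ler1n.
have ln2_gt0 : 0 < ln 2 :> R by rewrite ln_gt0// ltr1n.
have num : (2 ^+ k.+1) `^ (p * 2) = 4 `^ p * (u ^+ 2) `^ p.
  rewrite (mulrC p) powRrM exprS -/u powR_mulrn ?mulr_ge0 ?ltW// exprMn.
  by rewrite powRM ?exprn_ge0// expr2 -natrM.
have scale : (u ^+ 2) `^ p = dyadic_scale k `^ p * (2 `^ p * n `^ p).
  have -> : u ^+ 2 = dyadic_scale k * (2 * n) by rewrite /dyadic_scale -/u -/n; field; lra.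
  by rewrite !powRM ?(ltW (dyadic_scale_gt0 k)) //; lra.
have den : ln 2 `^ b * (n `^ p * n ^+ 2) <= (1 + plog u) `^ b.
  apply: le_trans (_ : (ln 2 * n) `^ b <= _); last first.
    have := plog_ge1 u; have := @ln2_mul_le_plog R k.
    by move=> ? ?; apply: ge0_ler_powR; rewrite ?nnegrE /b; nra.
  rewrite powRM; [|exact: ltW|lra].
  rewrite ler_wpM2l ?powR_ge0// /b powRD; last by apply/implyP => _; apply/negbT/gt_eqF; lra.
  rewrite ler_wpM2l ?powR_ge0// -powR_mulrn; last lra.
  by rewrite ler_powR//; lra.
have eight : 8 `^ p = 4 `^ p * 2 `^ p :> R by rewrite -powRM// -natrM.
rewrite num scale eight.
set S := dyadic_scale k `^ p; set L := (1 + plog u) `^ b; set l := ln 2 `^ b.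
have L_gt0 : 0 < L by rewrite powR_gt0//; have := plog_ge1 u; lra.
rewrite ler_pdivrMr//; apply: le_trans _ (ler_wpM2l _ den); last first.
  by rewrite mulr_ge0 ?powR_ge0// divr_ge0 ?exprn_ge0 ?divr_ge0 ?powR_ge0//; lra.
rewrite le_eqVlt; apply/orP; left; apply/eqP.
have : n `^ p != 0 by apply/negbT/gt_eqF; rewrite powR_gt0//; lra.
have : l != 0 by apply/negbT/gt_eqF; rewrite powR_gt0.
by move=> ? ?; rewrite -/l; field; lra.
Qed.

Lemma dyadic_weight_mul_le (p q r : R) k : 0 <= p -> 0 <= r <= q ->
  r * q * dyadic_scale k `^ p <= 1 ->
  (2 ^+ k.+1) `^ (p * 2) / (1 + plog (2 ^+ k : R)) `^ (p + (p + 2)) * r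
  <= 8 `^ p / ln 2 `^ (p + (p + 2)) / q / k.+1%:R ^+ 2.
Proof.
move=> p_ge0 /andP[r_ge0 rq] rqx.
(* [q = 0] forces [r = 0], and the right-hand side is [0] since [0^-1 = 0]. *)
have [q0|q_neq0] := eqVneq q 0.
  have -> : r = 0 by apply/eqP; rewrite eq_le r_ge0 -q0 rq.
  by rewrite q0 invr0 !(mulr0, mul0r).
have q_gt0 : 0 < q by rewrite lt_neqAle eq_sym q_neq0 (le_trans r_ge0).
apply: le_trans (ler_wpM2r r_ge0 (dyadic_weight_le k p_ge0)) _.
have xr : dyadic_scale k `^ p * r <= q^-1.
  by rewrite -[q^-1]mul1r ler_pdivlMr// (mulrC _ r) -mulrA (mulrC _ q) mulrA.
rewrite -!mulrA !ler_wpM2l ?invr_ge0 ?powR_ge0// [leRHS]mulrC.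
by rewrite ler_wpM2l ?invr_ge0 ?exprn_ge0.
Qed.

End dyadic_scale.

Section powR_div_plog.
Variables (R : realType) (a b : R).
Hypotheses (a_ge0 : 0 <= a) (b_ge0 : 0 <= b).

Lemma measurable_powR_div_plog :
  measurable_fun setT (fun t : R => t `^ a / (1 + plog t) `^ b).
Proof.
rewrite (_ : (fun t => _) = fun t => t `^ a * (1 + plog t) `^ (- b)); last first.
  by apply/funext => t; rewrite powRN.
have mplog : measurable_fun setT (fun t : R => 1 + plog t).
  apply: measurable_funD; first exact: measurable_cst.
  apply: (measurableT_comp (@measurable_ln R)).
  by apply: measurable_maxr; [exact: measurable_id|exact: measurable_cst].
apply: measurable_funM; first exact: measurable_powR.
exact: (measurableT_comp (f := fun u : R => u `^ (- b)) (measurable_powR _) mplog).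
Qed.

Lemma one_le_powR_plog t : 1 <= (1 + plog t) `^ b.
Proof.
have := plog_ge1 t => plog_t; have := @ge0_ler_powR R b b_ge0 1 (1 + plog t).
by rewrite powR1; apply; rewrite ?nnegrE; lra.
Qed.

Lemma powR_div_plog_ge0 t : 0 <= t `^ a / (1 + plog t) `^ b.
Proof. by rewrite divr_ge0 ?powR_ge0. Qed.

Lemma powR_div_plog_le1 t : 0 <= t < 1 -> t `^ a / (1 + plog t) `^ b <= 1.
Proof.
move=> /andP[t_ge0 t_lt1].
have den_gt0 := lt_le_trans ltr01 (one_le_powR_plog t).
rewrite ler_pdivrMr// mul1r; apply: le_trans (one_le_powR_plog t).
have := @ge0_ler_powR R a a_ge0 t 1.
by rewrite powR1; apply; rewrite ?nnegrE; lra.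
Qed.

Lemma powR_div_plog_le_dyadic k t : 2 ^+ k <= t <= 2 ^+ k.+1 ->
  t `^ a / (1 + plog t) `^ b <= (2 ^+ k.+1) `^ a / (1 + plog (2 ^+ k)) `^ b.
Proof.
move=> /andP[kt tk]; have k_gt0 : 0 < 2 ^+ k :> R by rewrite exprn_gt0.
rewrite ler_pM ?invr_ge0 ?powR_ge0 ?ge0_ler_powR ?nnegrE//; try lra.
have den_gt0 x := lt_le_trans ltr01 (one_le_powR_plog x).
rewrite lef_pV2 ?posrE// ge0_ler_powR ?nnegrE ?lerD2l ?ler_plog//.
- by have := plog_ge1 (2 ^+ k : R); lra.
- by have := plog_ge1 t; lra.
Qed.

End powR_div_plog.

Lemma measurable_normr_ge d (T : measurableType d) (R : realType) (Y : T -> R) c :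
  measurable_fun setT Y -> measurable [set w | c <= `|Y w|].
Proof.
move=> mY; rewrite -[X in measurable X]setTI.
have -> : [set w | c <= `|Y w|] = (Num.norm \o Y) @^-1` `[c, +oo[%classic.
  by apply/seteqP; split => w /=; rewrite in_itv /= andbT.
exact: (measurableT_comp (@normr_measurable R setT) mY measurableT (measurable_itv _)).
Qed.

Section dyadic_majorant.
Variables (R : realType) (f : R -> R) (M : nat -> R).
Hypotheses (M_ge0 : forall k, 0 <= M k)
  (f_le1 : forall t, 0 <= t < 1 -> f t <= 1)
  (f_le_M : forall k t, 2 ^+ k <= t <= 2 ^+ k.+1 -> f t <= M k).

Lemma le_dyadic_series t : 0 <= t ->
  ((f t)%:E <= 1 + \sum_(k <oo) (M k * (2 ^+ k <= t)%R%:R)%R%:E)%E.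
Proof.
move=> t_ge0.
have terms_ge0 k : (0 <= (M k * (2 ^+ k <= t)%R%:R)%:E)%E by rewrite lee_fin mulr_ge0.
have [t_lt1|t_ge1] := ltP t 1.
  by rewrite -[leLHS]adde0 leeD ?lee_fin ?f_le1 ?t_ge0// nneseries_ge0.
have [k /andP[kt tk]] := dyadic_floor t_ge1.
apply: le_trans (leeDr _ _); last by [].
apply: le_trans (nneseries_lim_ge k.+1 (fun n _ _ => terms_ge0 n)).
rewrite big_nat_recr//= -[leLHS]add0e leeD ?sume_ge0// kt mulr1 lee_fin.
by rewrite f_le_M// kt ltW.
Qed.

Variables (d : measure_display) (T : measurableType d) (P : probability T R).
Hypotheses (f_ge0 : forall t, 0 <= f t) (mf : measurable_fun setT f).

Lemma integral_le_dyadic_tails (Y : T -> R) : measurable_fun setT Y ->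
  (\int[P]_w (f `|Y w|)%:E
    <= 1 + \sum_(k <oo) (M k)%:E * P [set w | (2 ^+ k <= `|Y w|)%R])%E.
Proof.
move=> mY; set B := fun k => [set w | 2 ^+ k <= `|Y w|].
have mB k : measurable (B k) := measurable_normr_ge _ mY.
pose g k w := (M k * \1_(B k) w)%:E.
have g_ge0 k w : (0 <= g k w)%E by rewrite lee_fin mulr_ge0.
have mg k : measurable_fun setT (g k).
  by apply/measurable_EFinP/measurable_funM; [exact: measurable_cst|exact: measurable_indic].
have msum : measurable_fun setT (fun w => \sum_(k <oo) g k w)%E.
  exact: (ge0_emeasurable_sum (P := xpredT) (fun k w _ _ => g_ge0 k w) (fun k _ => mg k)).
apply: le_trans (_ : \int[P]_w (1 + \sum_(k <oo) g k w) <= _)%E.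
  apply: ge0_le_integral => //.
  - by move=> w _; rewrite lee_fin f_ge0.
  - exact/measurable_EFinP/(measurableT_comp mf)/(measurableT_comp (@normr_measurable R _)).
  - exact: emeasurable_funD.
  - move=> w _; apply: le_trans (le_dyadic_series (normr_ge0 (Y w))) _.
    rewrite leeD2l//; apply: lee_nneseries => [k _ _|k _]; first by rewrite lee_fin mulr_ge0.
    rewrite /g indicE; have [kY|kY] := boolP (2 ^+ k <= `|Y w|)%R.
      by rewrite mem_set.
    by rewrite memNset//; apply/negP.
rewrite ge0_integralD//; last by move=> w _; exact: nneseries_ge0.
rewrite integral_cst// mul1e; apply: leeD; first exact: probability_le1.
rewrite integral_nneseries//; apply: lee_nneseries => [k _ _|k _].
  by apply: integral_ge0 => w _.
rewrite /g; under eq_integral do rewrite EFinM.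
rewrite ge0_integralZl ?integral_indic ?setIT ?lee_fin//.
by apply/measurable_EFinP; exact: measurable_indic.
Qed.

End dyadic_majorant.

Section inverse_square_series.
Variable R : realType.

Lemma sum_inv_sq_le n : \sum_(k < n) (k.+1%:R ^+ 2)^-1 <= 2 - 2 / n.+1%:R :> R.
Proof.
elim: n => [|n IHn]; first by rewrite big_ord0 divr1 subrr.
rewrite big_ord_recr /=; apply: le_trans (lerD IHn (lexx _)) _.
rewrite -[n.+2%:R]natr1 -[n.+1%:R]natr1.
have n_ge0 : 0 <= n%:R :> R by [].
set m : R := n%:R in n_ge0 *; rewrite -subr_ge0.
have -> : 2 - 2 / (m + 1 + 1) - (2 - 2 / (m + 1) + ((m + 1) ^+ 2)^-1)
    = m / (m + 1) ^+ 2 / (m + 2) by field; lra.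
by rewrite !divr_ge0 ?exprn_ge0//; lra.
Qed.

Lemma nneseries_inv_sq_le (K : R) N : 0 <= K ->
  (\sum_(N <= k <oo) (K / k.+1%:R ^+ 2)%:E <= (K * 2)%:E)%E.
Proof.
move=> K_ge0; have terms_ge0 k : (0 <= (K / k.+1%:R ^+ 2)%:E)%E.
  by rewrite lee_fin divr_ge0.
apply: le_trans (_ : \sum_(0 <= k <oo) (K / k.+1%:R ^+ 2)%:E <= _)%E.
  by rewrite (nneseries_split 0 N)// add0n leeDr// sume_ge0.
apply: lime_le; first exact: is_cvg_nneseries.
apply: nearW => n; rewrite sumEFin lee_fin big_mkord -mulr_sumr ler_wpM2l//.
by apply: le_trans (sum_inv_sq_le n) _; rewrite lerBlDr lerDl divr_ge0.
Qed.

Lemma nneseries_lty_eventually_inv_sq (u : nat -> R) (K : R) :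
  (forall k, 0 <= u k) -> (\forall k \near \oo, u k <= K / k.+1%:R ^+ 2) ->
  (\sum_(k <oo) (u k)%:E < +oo)%E.
Proof.
move=> u_ge0 [N _ u_le].
have K_ge0 : 0 <= K.
  have := le_trans (u_ge0 N) (u_le N (leqnn N)).
  by rewrite pmulr_lge0// invr_gt0 exprn_gt0.
rewrite (nneseries_split 0 N) ?add0n; last by move=> k _; rewrite lee_fin.
apply: lte_add_pinfty; first by rewrite sumEFin ltry.
apply: (le_lt_trans _ (ltry (K * 2))); apply: le_trans (nneseries_inv_sq_le N K_ge0).
rewrite !ereal_series; apply: lee_nneseries => [k _ _|k Nk]; rewrite lee_fin//.
exact: u_le.
Qed.

End inverse_square_series.

Section dyadic_tail.
Variables (d : measure_display) (T : measurableType d) (R : realType).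
Variables (P : probability T R) (X Y : {RV P >-> R}).

Definition dyadic_tail k := fine (P [set w | (2 ^+ k <= `|X w|)%R]).

Lemma measurable_dyadic_tail k : measurable [set w | (2 ^+ k <= `|X w|)%R].
Proof. exact/measurable_normr_ge/measurable_funP. Qed.

Lemma dyadic_tailE k : P [set w | (2 ^+ k <= `|X w|)%R] = (dyadic_tail k)%:E.
Proof. by rewrite fineK// fin_num_measure//; exact: measurable_dyadic_tail. Qed.

Lemma dyadic_tail_ge0 k : 0 <= dyadic_tail k.
Proof. by rewrite fine_ge0 ?measure_ge0. Qed.

Lemma le_dyadic_tail0 k : dyadic_tail k <= dyadic_tail 0.
Proof.
rewrite -lee_fin -!dyadic_tailE; apply: le_measure; rewrite ?inE.
- exact: measurable_dyadic_tail.
- exact: measurable_dyadic_tail.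
- by move=> w /=; apply: le_trans; rewrite expr0 exprn_ege1// ler1n.
Qed.

Hypotheses (XY_indep : indep2 P X Y) (XY_ident : ident_distr P X Y).

Lemma tail_mul_le s t c : 0 <= s -> 0 <= t -> c <= s * t ->
  (P [set w | (s <= `|X w|)%R] * P [set w | (t <= `|X w|)%R]
    <= P [set w | (c <= `|X w * Y w|)%R])%E.
Proof.
move=> s_ge0 t_ge0 c_le.
pose A c := [set y : R | c <= `|y|].
have mA c : measurable (A c) := measurable_normr_ge (Y := id) c (@measurable_id _ _ setT).
change (P (X @^-1` A s) * P (X @^-1` A t) <= P [set w | (c <= `|X w * Y w|)%R])%E.
rewrite (XY_ident (mA t)) -XY_indep//.
apply: le_measure; rewrite ?inE.
- by apply: measurableI; exact: measurable_funPTI.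
- exact: measurable_normr_ge (measurable_funM (measurable_funP X) (measurable_funP Y)).
- by move=> w [/= Xs Yt]; rewrite (le_trans c_le)// normrM ler_pM.
Qed.

Lemma dyadic_tail_mul_le (p : R) k : let x := dyadic_scale R k in
  ((x `^ p)%:E * P [set w | (Num.sqrt (x * plog x) <= `|X w * Y w|)%R] < 1)%E ->
  dyadic_tail k * dyadic_tail 0 * x `^ p <= 1.
Proof.
move=> x; set S := [set w | _ <= _].
have mS : measurable S.
  exact/measurable_normr_ge/measurable_funM; exact: measurable_funP.
rewrite -(fineK (fin_num_measure P _ mS)) -EFinM lte_fin => /ltW.
apply: le_trans; rewrite mulrC ler_wpM2l ?powR_ge0// -lee_fin fineK ?fin_num_measure//.
rewrite EFinM -!dyadic_tailE tail_mul_le ?exprn_ge0// expr0 mulr1.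
exact: sqrt_dyadic_scale_le.
Qed.

End dyadic_tail.

Theorem lemma6p4 (d : measure_display) (T : measurableType d) (R : realType)
  (P : probability T R) (X1 X2 : {RV P >-> R}) (alpha : R) :
  0 < alpha ->
  indep2 P X1 X2 ->
  ident_distr P X1 X2 ->
  ((x `^ (1 + 2 * alpha))%:E
     * P [set w | (Num.sqrt (x * plog x) <= `|X1 w * X2 w|)%R])%E
    @[x --> +oo] --> 0%E ->
  (\int[P]_w ((`|X1 w| `^ (2 + 4 * alpha)
                / (1 + plog `|X1 w|) `^ (4 + 4 * alpha))%:E) < +oo)%E.
Proof.
move=> alpha_gt0 indep ident tail_cvg.
set p := 1 + 2 * alpha; have p_ge0 : 0 <= p by rewrite /p; lra.
have -> : 2 + 4 * alpha = p * 2 by rewrite /p; ring.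
have -> : 4 + 4 * alpha = p + (p + 2) by rewrite /p; ring.
have a_ge0 : 0 <= p * 2 by lra.
have b_ge0 : 0 <= p + (p + 2) by lra.
pose M k := (2 ^+ k.+1) `^ (p * 2) / (1 + plog (2 ^+ k : R)) `^ (p + (p + 2)).
have M_ge0 k : 0 <= M k by rewrite divr_ge0 ?powR_ge0.
have := integral_le_dyadic_tails M_ge0 (powR_div_plog_le1 a_ge0 b_ge0)
  (powR_div_plog_le_dyadic a_ge0 b_ge0) P (powR_div_plog_ge0 _ _)
  (measurable_powR_div_plog _ _) (measurable_funP X1).
move/le_lt_trans; apply; apply: lte_add_pinfty; first exact: ltry.
under eq_eseriesr do rewrite dyadic_tailE -EFinM.
apply: (@nneseries_lty_eventually_inv_sq _ _
  (8 `^ p / ln 2 `^ (p + (p + 2)) / dyadic_tail X1 0)).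
  by move=> k; rewrite mulr_ge0 ?dyadic_tail_ge0.
have small : \forall k \near \oo, let x := dyadic_scale R k in
    ((x `^ p)%:E * P [set w | (Num.sqrt (x * plog x) <= `|X1 w * X2 w|)%R] < 1)%E.
  exact: (cvg_comp _ _ (@dyadic_scale_cvgy R) tail_cvg _ (open_ereal_lt' lte01)).
apply: filterS small => k x_small.
apply: dyadic_weight_mul_le; rewrite ?dyadic_tail_ge0 ?le_dyadic_tail0//.
exact: dyadic_tail_mul_le x_small.
Qed.
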